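(* Let $\kappa>0$, $u_0>0$, and let $u$ be the solution of $\frac{d}{dr}\big(u'/\sqrt{1+u'^2}\big)=\kappa u$, $u(0)=u_0$, $u'(0)=0$. Let $a>0$ and $0\le\gamma<\pi/2$ be such that $u$ is defined on $[0,a)$ and $\sin\psi(a)=\cos\gamma$, where $\sin\psi=u'/\sqrt{1+u'^2}$ (extended continuously to $r=a$). Then $$\frac{2(1-\sin\gamma)}{\kappa f(\gamma)}<u(a)-u_0<\frac{a(1-\sin\gamma)}{\cos\gamma},\qquad f(\gamma)=\frac{2\cos\gamma}{\kappa a}-\frac{a\tan\gamma}2+\frac a{2\cos^2\gamma}\Big(\frac\pi2-\gamma\Big).$$
   Context: $u$ is the profile of a $\kappa$-cylindrical capillary surface $z=u(x)$ between vertical plates $x=\pm a$ with contact angle $\gamma$. *)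

From Stdlib Require Import Reals.
From Coquelicot Require Import Coquelicot.
Open Scope R_scope.

Definition sin_psi (du : R -> R) (r : R) : R := du r / sqrt (1 + (du r) ^ 2).

Definition f_gamma (kappa a gamma : R) : R :=
  2 * cos gamma / (kappa * a) - a * tan gamma / 2
  + a / (2 * (cos gamma) ^ 2) * (PI / 2 - gamma).

From Stdlib Require Import Reals Lra Psatz.
From Coquelicot Require Import Coquelicot.
Open Scope R_scope.

(* Since (sin psi)' = kappa u and u' = tan psi, the quantity kappa u^2/2 + cos psi is a first
   integral; at r = a it gives kappa (u(a)^2 - u0^2) = 2 (1 - sin gamma), so the lower bound
   amounts to u(a) + u0 < f(gamma).  As (r kappa u - sin psi)' = kappa r u' > 0, the ratio
   sin psi (r) / r increases, hence sin psi (r) < r cos gamma / a: the profile is flatter than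
   the circular arc of radius a / cos gamma with horizontal tangent at r = 0, which meets the
   wall at the same angle.  Comparing u' with the slope of that arc bounds u(a) - u0 by the
   rise a (1 - sin gamma) / cos gamma of the arc.  Comparing r u' = (r u - sin psi / kappa)'
   with r times the arc's slope bounds a u(a) - cos gamma / kappa by the integral of the
   latter over [0, a]; together with kappa u0 a <= cos gamma (from sin psi >= kappa u0 r)
   this is a (u(a) + u0) < a f(gamma). *)

Lemma is_derive_mvt (f df : R -> R) x y : x < y ->
  (forall t, x <= t <= y -> is_derive f t (df t)) ->
  exists c, x < c < y /\ f y - f x = df c * (y - x).
Proof.
  intros Hxy Hf.
  destruct (MVT_cor2 f df x y Hxy) as (c & E & Hc).
  - intros t Ht. now apply is_derive_Reals, Hf.
  - now exists c.
Qed.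

Lemma is_derive_pos_lt (f df : R -> R) x y : x < y ->
  (forall t, x <= t <= y -> is_derive f t (df t)) ->
  (forall t, x < t < y -> 0 < df t) -> f x < f y.
Proof.
  intros Hxy Hf Hpos. destruct (is_derive_mvt f df x y Hxy Hf) as (c & Hc & E).
  specialize (Hpos c Hc). nra.
Qed.

Lemma is_derive_nonneg_le (f df : R -> R) x y : x <= y ->
  (forall t, x <= t <= y -> is_derive f t (df t)) ->
  (forall t, x < t < y -> 0 <= df t) -> f x <= f y.
Proof.
  intros [Hxy | ->] Hf Hpos; [|lra].
  destruct (is_derive_mvt f df x y Hxy Hf) as (c & Hc & E).
  specialize (Hpos c Hc). nra.
Qed.

Lemma is_derive_zero_eq (f : R -> R) x y : x <= y ->
  (forall t, x <= t <= y -> is_derive f t 0) -> f x = f y.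
Proof.
  intros [Hxy | ->] Hf; [|reflexivity].
  destruct (is_derive_mvt f (fun _ => 0) x y Hxy Hf) as (c & _ & E). lra.
Qed.

Lemma at_left_of_interval (P : R -> Prop) b a : b < a ->
  (forall t, b < t < a -> P t) -> at_left a P.
Proof.
  intros Hba HP. exists (mkposreal _ (proj2 (Rlt_0_minus b a) Hba)).
  intros t Ht Hta. apply HP. split; [|exact Hta].
  apply Rabs_lt_between in Ht. simpl in Ht. unfold minus, plus, opp in Ht; simpl in Ht. lra.
Qed.

Lemma left_limit_le (f g : R -> R) b a (L M : R) : b < a ->
  filterlim f (at_left a) (locally L) -> filterlim g (at_left a) (locally M) ->
  (forall t, b < t < a -> f t <= g t) -> L <= M.
Proof.
  intros Hba Hf Hg Hfg.
  exact (filterlim_le f g L M (at_left_of_interval _ b a Hba Hfg) Hf Hg).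
Qed.

Lemma left_limit_unique (f : R -> R) a (L M : R) :
  filterlim f (at_left a) (locally L) -> filterlim f (at_left a) (locally M) -> L = M.
Proof. apply (filterlim_locally_unique (F := at_left a) f). Qed.

Lemma left_limit_gt_of_increasing (f df g : R -> R) b a (L : R) : b < a ->
  (forall t, b <= t < a -> is_derive f t (df t)) -> (forall t, b < t < a -> 0 < df t) ->
  filterlim g (at_left a) (locally L) -> (forall t, b < t < a -> f t <= g t) ->
  f b < L.
Proof.
  intros Hba Hf Hpos Hg Hfg.
  assert (Hm : b < (b + a) / 2 < a) by lra. set (m := (b + a) / 2) in Hm |- *.
  apply Rlt_le_trans with (f m).
  - apply (is_derive_pos_lt f df); [lra | intros; apply Hf | intros; apply Hpos]; lra.
  - apply (left_limit_le (fun _ => f m) g m a); [lra | apply filterlim_const | exact Hg |].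
    intros t Ht. apply Rle_trans with (f t); [|apply Hfg; lra].
    apply (is_derive_nonneg_le f df); [lra | intros; apply Hf; lra |].
    intros z Hz. left. apply Hpos. lra.
Qed.

Lemma filterlim_at_left_id a : filterlim (fun t => t) (at_left a) (locally a).
Proof. intros P [eps H]. exists eps. intros y Hy _. now apply H. Qed.

Section FilterlimR.
Context {T : Type} {F : (T -> Prop) -> Prop} {FF : Filter F}.

Lemma filterlim_Rplus (f g : T -> R) (L M : R) :
  filterlim f F (locally L) -> filterlim g F (locally M) ->
  filterlim (fun t => f t + g t) F (locally (L + M)).
Proof. intros Hf Hg. exact (filterlim_comp_2 f g Rplus Hf Hg (filterlim_plus L M)). Qed.

Lemma filterlim_Rmult (f g : T -> R) (L M : R) :
  filterlim f F (locally L) -> filterlim g F (locally M) ->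
  filterlim (fun t => f t * g t) F (locally (L * M)).
Proof. intros Hf Hg. exact (filterlim_comp_2 f g Rmult Hf Hg (filterlim_mult L M)). Qed.

Lemma filterlim_continuous_comp (h : R -> R) (f : T -> R) (L : R) : continuous h L ->
  filterlim f F (locally L) -> filterlim (fun t => h (f t)) F (locally (h L)).
Proof. intros Hh Hf. exact (filterlim_comp _ _ _ f h _ _ _ Hf Hh). Qed.

End FilterlimR.

Definition tan_of_sin (x : R) : R := x / sqrt (1 - x ^ 2).

Lemma sin_psi_sqr_lt1 (du : R -> R) r : sin_psi du r ^ 2 < 1.
Proof.
  unfold sin_psi. set (d := du r).
  assert (Hw : 0 < sqrt (1 + d ^ 2)) by (apply sqrt_lt_R0; nra).
  unfold Rdiv. rewrite Rpow_mult_distr, pow_inv, pow2_sqrt by nra.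
  apply (Rmult_lt_reg_r (1 + d ^ 2)); [nra|]. field_simplify; nra.
Qed.

Lemma tan_of_sin_sin_psi (du : R -> R) r : tan_of_sin (sin_psi du r) = du r.
Proof.
  unfold tan_of_sin, sin_psi. set (d := du r).
  assert (Hw : 0 < sqrt (1 + d ^ 2)) by (apply sqrt_lt_R0; nra).
  replace (1 - (d / sqrt (1 + d ^ 2)) ^ 2) with ((/ sqrt (1 + d ^ 2)) ^ 2).
  - rewrite sqrt_pow2 by (left; apply Rinv_0_lt_compat, Hw). field. lra.
  - unfold Rdiv. rewrite Rpow_mult_distr, !pow_inv, pow2_sqrt by nra. field. nra.
Qed.

Lemma tan_of_sin_lt x y : 0 <= x -> x < y -> y < 1 -> tan_of_sin x < tan_of_sin y.
Proof.
  intros Hx Hxy Hy. unfold tan_of_sin.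
  assert (Sy : 0 < sqrt (1 - y ^ 2)) by (apply sqrt_lt_R0; nra).
  assert (Syx : sqrt (1 - y ^ 2) <= sqrt (1 - x ^ 2)) by (apply sqrt_le_1_alt; nra).
  apply Rle_lt_trans with (x / sqrt (1 - y ^ 2)).
  - apply Rmult_le_compat_l; [lra|]. now apply Rinv_le_contravar.
  - apply Rmult_lt_compat_r; [apply Rinv_0_lt_compat|]; lra.
Qed.

Definition arc_height (rho t : R) : R := rho * (1 - sqrt (1 - (t / rho) ^ 2)).

Definition circ_segment (x : R) : R := asin x - x * sqrt (1 - x ^ 2).

Definition arc_moment (rho t : R) : R := rho ^ 2 / 2 * circ_segment (t / rho).

Lemma is_derive_arc_height rho t : 0 < rho -> (t / rho) ^ 2 < 1 ->
  is_derive (arc_height rho) t (tan_of_sin (t / rho)).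
Proof.
  intros Hrho Ht. unfold arc_height, tan_of_sin.
  assert (0 < sqrt (1 - (t / rho) ^ 2)) by (apply sqrt_lt_R0; lra).
  auto_derive; [lra|].
  replace (1 + - (t * / rho * (t * / rho * 1))) with (1 - (t / rho) ^ 2) by (unfold Rdiv; ring).
  field. lra.
Qed.

Lemma is_derive_asin x : -1 < x < 1 -> is_derive asin x (/ sqrt (1 - x ^ 2)).
Proof.
  intros Hx. apply is_derive_Reals, (derive_pt_eq_1 _ _ _ (derivable_pt_asin x Hx)).
  rewrite derive_pt_asin. unfold Rsqr. replace (x ^ 2) with (x * x) by ring. apply Rmult_1_l.
Qed.

Lemma is_derive_circ_segment x : -1 < x < 1 ->
  is_derive circ_segment x (2 * x * tan_of_sin x).
Proof.
  intros Hx. unfold circ_segment, tan_of_sin.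
  assert (Hx2 : 0 < 1 - x ^ 2) by nra.
  assert (HS : 0 < sqrt (1 - x ^ 2)) by (now apply sqrt_lt_R0).
  assert (HS2 : sqrt (1 - x ^ 2) * sqrt (1 - x ^ 2) = 1 - x ^ 2) by (apply sqrt_sqrt; lra).
  set (S := sqrt (1 - x ^ 2)) in *.
  assert (Hprod : is_derive (fun y => y * sqrt (1 - y ^ 2)) x (S - x ^ 2 / S)).
  { auto_derive; [lra|]. fold S. replace (1 + - (x * (x * 1))) with (1 - x ^ 2) by ring.
    fold S. field. lra. }
  replace (2 * x * (x / S)) with (/ S - (S - x ^ 2 / S)).
  - exact (is_derive_minus asin _ x _ _ (is_derive_asin x Hx) Hprod).
  - replace (/ S - (S - x ^ 2 / S)) with ((1 - S * S + x ^ 2) / S) by (field; lra).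
    rewrite HS2. field. lra.
Qed.

Lemma is_derive_arc_moment rho t : 0 < rho -> (t / rho) ^ 2 < 1 ->
  is_derive (arc_moment rho) t (t * tan_of_sin (t / rho)).
Proof.
  intros Hrho Ht. unfold arc_moment.
  assert (Hseg := is_derive_circ_segment (t / rho) ltac:(nra)).
  assert (Hlin : is_derive (fun y => y / rho) t (/ rho)) by (auto_derive; [lra | field; lra]).
  replace (t * tan_of_sin (t / rho))
    with (rho ^ 2 / 2 * (/ rho * (2 * (t / rho) * tan_of_sin (t / rho)))) by (field; lra).
  exact (is_derive_scal _ t _ _ (is_derive_comp circ_segment _ t _ _ Hseg Hlin)).
Qed.

Lemma circ_segment_asin x : -1 <= x <= 1 ->
  circ_segment x = asin x - sin (asin x) * cos (asin x).
Proof.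
  intros Hx. unfold circ_segment. rewrite sin_asin, cos_asin by lra.
  unfold Rsqr. do 3 f_equal. ring.
Qed.

Lemma asin_le x y : -1 <= x -> x <= y -> y <= 1 -> asin x <= asin y.
Proof.
  intros Hx Hxy Hy. apply Rnot_lt_le. intros Hlt.
  pose proof (asin_bound x). pose proof (asin_bound y).
  assert (Hsin : sin (asin y) < sin (asin x)) by (apply sin_increasing_1; lra).
  rewrite !sin_asin in Hsin by lra. lra.
Qed.

Lemma circ_segment_le x y : -1 <= x -> x <= y -> y <= 1 -> circ_segment x <= circ_segment y.
Proof.
  intros Hx Hxy Hy. rewrite !circ_segment_asin by lra.
  apply (is_derive_nonneg_le (fun p => p - sin p * cos p) (fun p => 2 * sin p ^ 2));
    [now apply asin_le | | intros; nra].
  intros p _. auto_derive; [easy|].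
  pose proof (sin2_cos2 p). unfold Rsqr in *. nra.
Qed.

Section CapillaryProfile.
Variables (kappa u0 a : R) (u du : R -> R).
Hypothesis Hkappa : 0 < kappa.
Hypothesis Hu0 : 0 < u0.
Hypothesis Hu' : forall r, 0 <= r < a -> is_derive u r (du r).
Hypothesis Hs' : forall r, 0 <= r < a -> is_derive (sin_psi du) r (kappa * u r).
Hypothesis Hu_0 : u 0 = u0.
Hypothesis Hdu_0 : du 0 = 0.

Local Notation s := (sin_psi du).

Lemma sin_psi_0 : s 0 = 0.
Proof. unfold sin_psi. rewrite Hdu_0. unfold Rdiv. ring. Qed.

Lemma is_derive_energy r : 0 <= r < a ->
  is_derive (fun t => kappa * u t ^ 2 / 2 + sqrt (1 - s t ^ 2)) r 0.
Proof.
  intros Hr. pose proof (sin_psi_sqr_lt1 du r).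
  assert (Hsq : 0 < sqrt (1 - s r ^ 2)) by (apply sqrt_lt_R0; lra).
  auto_derive.
  - repeat split; [now exists (du r); apply Hu' | now eexists; apply Hs' | nra].
  - rewrite (is_derive_unique (fun t : R => u t) _ _ (Hu' r Hr)),
      (is_derive_unique (fun t : R => s t) _ _ (Hs' r Hr)).
    rewrite <- (tan_of_sin_sin_psi du r). unfold tan_of_sin.
    replace (1 + - (s r * (s r * 1))) with (1 - s r ^ 2) by ring.
    field. lra.
Qed.

Lemma energy_conservation r : 0 <= r < a ->
  kappa * u r ^ 2 / 2 + sqrt (1 - s r ^ 2) = kappa * u0 ^ 2 / 2 + 1.
Proof.
  intros Hr.
  assert (E := is_derive_zero_eq (fun t => kappa * u t ^ 2 / 2 + sqrt (1 - s t ^ 2)) 0 r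
                 (proj1 Hr) (fun t Ht => is_derive_energy t ltac:(lra))).
  cbv beta in E. rewrite sin_psi_0, Hu_0 in E. rewrite <- E.
  replace (1 - 0 ^ 2) with 1 by ring. now rewrite sqrt_1.
Qed.

Lemma profile_sqr_ge r : 0 <= r < a -> u0 ^ 2 <= u r ^ 2.
Proof.
  intros Hr. pose proof (energy_conservation r Hr).
  assert (sqrt (1 - s r ^ 2) <= 1).
  { rewrite <- sqrt_1 at 2. apply sqrt_le_1_alt. pose proof (pow2_ge_0 (s r)). lra. }
  nra.
Qed.

Lemma profile_pos r : 0 <= r < a -> 0 < u r.
Proof.
  intros Hr. apply Rnot_le_lt. intros Hur.
  assert (Hr0 : 0 < r).
  { destruct (Req_dec r 0) as [->|]; [rewrite Hu_0 in Hur; lra | lra]. }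
  assert (Hzero : exists z, 0 <= z <= r /\ u z = 0).
  { destruct (Req_dec (u r) 0) as [E | Hne]; [exists r; split; [lra | exact E]|].
    destruct (Ranalysis5.IVT_interv (fun t => - u t) 0 r) as [z [Hz Hzv]]; [| lra | lra | lra |].
    - intros t Ht. apply continuity_pt_opp, derivable_continuous_pt.
      exists (du t). apply is_derive_Reals, Hu'. lra.
    - exists z. split; [exact Hz | lra]. }
  destruct Hzero as (z & Hz & Huz).
  pose proof (profile_sqr_ge z ltac:(lra)). rewrite Huz in *. nra.
Qed.

Lemma profile_ge r : 0 <= r < a -> u0 <= u r.
Proof.
  intros Hr. pose proof (profile_pos r Hr). pose proof (profile_sqr_ge r Hr). nra.
Qed.

Lemma sin_psi_lt x y : 0 <= x -> x < y -> y < a -> s x < s y.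
Proof.
  intros Hx Hxy Hy. apply (is_derive_pos_lt s (fun t => kappa * u t)); [exact Hxy | |].
  - intros t Ht. apply Hs'. lra.
  - intros t Ht. pose proof (profile_pos t ltac:(lra)). nra.
Qed.

Lemma sin_psi_pos r : 0 < r < a -> 0 < s r.
Proof. intros Hr. rewrite <- sin_psi_0. apply sin_psi_lt; lra. Qed.

Lemma du_pos r : 0 < r < a -> 0 < du r.
Proof.
  intros Hr. rewrite <- tan_of_sin_sin_psi. apply Rdiv_lt_0_compat; [now apply sin_psi_pos|].
  apply sqrt_lt_R0. pose proof (sin_psi_sqr_lt1 du r). lra.
Qed.

Lemma sin_psi_ge_linear r : 0 <= r < a -> kappa * u0 * r <= s r.
Proof.
  intros Hr.
  assert (H := is_derive_nonneg_le (fun t => s t - kappa * u0 * t)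
                 (fun t => kappa * u t - kappa * u0) 0 r).
  cbv beta in H. rewrite sin_psi_0 in H.
  enough (0 - kappa * u0 * 0 <= s r - kappa * u0 * r) by lra.
  apply H; [lra | |].
  - intros t Ht. apply (is_derive_minus s (fun t => kappa * u0 * t)); [apply Hs'; lra|].
    auto_derive; [easy | ring].
  - intros t Ht. pose proof (profile_ge t ltac:(lra)). nra.
Qed.

Lemma sin_psi_lt_r_deriv r : 0 < r < a -> s r < r * (kappa * u r).
Proof.
  intros Hr.
  assert (H := is_derive_pos_lt (fun t => t * (kappa * u t) - s t)
                 (fun t => t * (kappa * du t)) 0 r).
  cbv beta in H. rewrite sin_psi_0 in H.
  enough (0 * (kappa * u 0) - 0 < r * (kappa * u r) - s r) by lra.
  apply H; [lra | |].
  - intros t Ht. auto_derive.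
    + repeat split; [now exists (du t); apply Hu'; lra | now eexists; apply Hs'; lra].
    + rewrite (is_derive_unique (fun t : R => u t) _ _ (Hu' t ltac:(lra))),
        (is_derive_unique (fun t : R => s t) _ _ (Hs' t ltac:(lra))). ring.
  - intros t Ht. pose proof (du_pos t ltac:(lra)). apply Rmult_lt_0_compat; [lra | nra].
Qed.

Lemma is_derive_sin_psi_div r : 0 < r < a ->
  is_derive (fun t => s t / t) r ((r * (kappa * u r) - s r) / r ^ 2).
Proof.
  intros Hr. auto_derive.
  - split; [now eexists; apply Hs'; lra | split; [lra | easy]].
  - rewrite (is_derive_unique (fun t : R => s t) _ _ (Hs' r ltac:(lra))). field. lra.
Qed.

Section EndValues.
Variables (c U : R).
Hypothesis Ha : 0 < a.
Hypothesis Hs_a : filterlim s (at_left a) (locally c).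
Hypothesis Hu_a : filterlim u (at_left a) (locally U).

Lemma kappa_u0_a_le : kappa * u0 * a <= c.
Proof.
  apply (left_limit_le (fun t => kappa * u0 * t) s 0 a); [exact Ha | | exact Hs_a |].
  - apply filterlim_Rmult; [apply filterlim_const | apply filterlim_at_left_id].
  - intros t Ht. apply sin_psi_ge_linear. lra.
Qed.

Lemma sin_psi_div_lt r : 0 < r < a -> s r / r < c / a.
Proof.
  intros Hr.
  apply (left_limit_gt_of_increasing (fun t => s t / t)
           (fun t => (t * (kappa * u t) - s t) / t ^ 2) (fun t => s t / t) r a);
    [lra | | | | intros; apply Rle_refl].
  - intros t Ht. apply is_derive_sin_psi_div. lra.
  - intros t Ht. pose proof (sin_psi_lt_r_deriv t ltac:(lra)).
    apply Rdiv_lt_0_compat; [lra | apply pow_lt; lra].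
  - apply (filterlim_Rmult s (fun t => / t)); [exact Hs_a|].
    apply (filterlim_continuous_comp Rinv (fun t => t)); [|apply filterlim_at_left_id].
    exact (ex_derive_continuous Rinv a ltac:(auto_derive; lra)).
Qed.

Lemma end_sin_psi_pos : 0 < c.
Proof.
  pose proof (sin_psi_div_lt (a / 2) ltac:(lra)). pose proof (sin_psi_pos (a / 2) ltac:(lra)).
  assert (0 < s (a / 2) / (a / 2)) by (apply Rdiv_lt_0_compat; lra).
  assert (0 < c / a) by lra.
  apply (Rmult_lt_reg_r (/ a)); [now apply Rinv_0_lt_compat | lra].
Qed.

Lemma end_sin_psi_le1 : c <= 1.
Proof.
  apply (left_limit_le s (fun _ => 1) 0 a _ _ Ha Hs_a (filterlim_const 1)).
  intros t _. pose proof (sin_psi_sqr_lt1 du t). nra.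
Qed.

Lemma arc_arg_lt t : 0 <= t < a -> 0 <= t / (a / c) < c.
Proof.
  intros Ht. pose proof end_sin_psi_pos. replace (t / (a / c)) with (c * t / a) by (field; lra).
  split; [apply Rdiv_le_0_compat; nra |].
  apply (Rmult_lt_reg_r a); [lra|]. field_simplify; nra.
Qed.

Lemma du_lt_arc_slope r : 0 < r < a -> du r < tan_of_sin (r / (a / c)).
Proof.
  intros Hr. pose proof end_sin_psi_pos. pose proof end_sin_psi_le1.
  pose proof (sin_psi_div_lt r Hr). pose proof (arc_arg_lt r ltac:(lra)).
  rewrite <- tan_of_sin_sin_psi. apply tan_of_sin_lt; [left; now apply sin_psi_pos | | lra].
  replace (r / (a / c)) with (c / a * r) by (field; lra).
  apply (Rmult_lt_reg_r (/ r)); [apply Rinv_0_lt_compat; lra|]. field_simplify; lra.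
Qed.

Lemma energy_at_end : kappa * U ^ 2 / 2 + sqrt (1 - c ^ 2) = kappa * u0 ^ 2 / 2 + 1.
Proof.
  set (E := kappa * u0 ^ 2 / 2 + 1).
  enough (sqrt (1 - c ^ 2) = E + - (kappa / 2) * (U * U)) by nra.
  apply (left_limit_unique (fun t => sqrt (1 - s t ^ 2)) a).
  - apply (filterlim_continuous_comp (fun y => sqrt (1 - y ^ 2)) s c); [|exact Hs_a].
    apply (continuous_comp (fun y => 1 - y ^ 2) sqrt); [|apply continuous_sqrt].
    exact (ex_derive_continuous (fun y => 1 - y ^ 2) c ltac:(auto_derive; easy)).
  - apply (filterlim_ext_loc (fun t => E + - (kappa / 2) * (u t * u t))).
    + apply (at_left_of_interval _ 0 a Ha). intros t Ht.
      pose proof (energy_conservation t ltac:(lra)). unfold E. nra.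
    + apply filterlim_Rplus; [apply filterlim_const|].
      apply filterlim_Rmult; [apply filterlim_const | now apply filterlim_Rmult].
Qed.

Lemma end_height_ge_u0 : u0 <= U.
Proof.
  apply (left_limit_le (fun _ => u0) u 0 a _ _ Ha (filterlim_const u0) Hu_a).
  intros t Ht. apply profile_ge. lra.
Qed.

Lemma height_lt_arc : U - u0 < a / c * (1 - sqrt (1 - c ^ 2)).
Proof.
  pose proof end_sin_psi_pos as Hc. set (h := a / c * (1 - sqrt (1 - c ^ 2))).
  assert (H : arc_height (a / c) 0 - u 0 < h + -1 * U).
  { apply (left_limit_gt_of_increasing (fun t => arc_height (a / c) t - u t)
             (fun t => tan_of_sin (t / (a / c)) - du t) (fun t => h + -1 * u t) 0 a);
      [exact Ha | | | |].
    - intros t Ht. pose proof (arc_arg_lt t Ht). pose proof end_sin_psi_le1.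
      apply (is_derive_minus (arc_height (a / c)) u); [apply is_derive_arc_height | apply Hu'];
        [apply Rdiv_lt_0_compat | ..]; nra.
    - intros t Ht. pose proof (du_lt_arc_slope t Ht). lra.
    - apply filterlim_Rplus; [apply filterlim_const|].
      apply filterlim_Rmult; [apply filterlim_const | exact Hu_a].
    - intros t Ht. pose proof (arc_arg_lt t ltac:(lra)).
      assert (sqrt (1 - c ^ 2) <= sqrt (1 - (t / (a / c)) ^ 2)) by (apply sqrt_le_1_alt; nra).
      unfold arc_height, h. assert (0 < a / c) by (apply Rdiv_lt_0_compat; lra). nra. }
  unfold arc_height in H. rewrite Hu_0 in H.
  replace (1 - (0 / (a / c)) ^ 2) with 1 in H by (field; lra). rewrite sqrt_1 in H. lra.
Qed.

Lemma moment_lt_arc : a * U < arc_moment (a / c) a + c / kappa.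
Proof.
  pose proof end_sin_psi_pos as Hc. set (m := arc_moment (a / c) a).
  assert (H : arc_moment (a / c) 0 - 0 * u 0 + s 0 / kappa < m + -1 * (a * U) + / kappa * c).
  { apply (left_limit_gt_of_increasing (fun t => arc_moment (a / c) t - t * u t + s t / kappa)
             (fun t => t * (tan_of_sin (t / (a / c)) - du t))
             (fun t => m + -1 * (t * u t) + / kappa * s t) 0 a); [exact Ha | | | |].
    - intros t Ht. pose proof (arc_arg_lt t Ht). pose proof end_sin_psi_le1.
      assert (Hm := is_derive_arc_moment (a / c) t (Rdiv_lt_0_compat _ _ Ha Hc) ltac:(nra)).
      auto_derive.
      + repeat split; eexists; [exact Hm | apply Hu'; lra | apply Hs'; lra].
      + rewrite (is_derive_unique (fun x : R => arc_moment (a / c) x) _ _ Hm),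
          (is_derive_unique (fun x : R => u x) _ _ (Hu' t Ht)),
          (is_derive_unique (fun x : R => s x) _ _ (Hs' t Ht)).
        field. lra.
    - intros t Ht. pose proof (du_lt_arc_slope t Ht). apply Rmult_lt_0_compat; lra.
    - apply filterlim_Rplus; [apply filterlim_Rplus|]; [apply filterlim_const | |].
      + apply filterlim_Rmult; [apply filterlim_const|].
        apply filterlim_Rmult; [apply filterlim_at_left_id | exact Hu_a].
      + apply filterlim_Rmult; [apply filterlim_const | exact Hs_a].
    - intros t Ht. pose proof (arc_arg_lt t ltac:(lra)). pose proof end_sin_psi_le1.
      assert (arc_moment (a / c) t <= m).
      { unfold m, arc_moment. replace (a / (a / c)) with c by (field; lra).
        apply Rmult_le_compat_l; [apply Rdiv_le_0_compat; [apply pow2_ge_0 | lra]|].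
        apply circ_segment_le; lra. }
      unfold Rdiv. lra. }
  unfold arc_moment, circ_segment in H. rewrite sin_psi_0 in H.
  replace (0 / (a / c)) with 0 in H by (field; lra). rewrite asin_0 in H.
  replace (c / kappa) with (/ kappa * c) by (field; lra). lra.
Qed.

Lemma capillary_rise_bounds :
  2 * (1 - sqrt (1 - c ^ 2)) / (kappa * ((2 * c / kappa + arc_moment (a / c) a) / a)) < U - u0
  < a / c * (1 - sqrt (1 - c ^ 2)).
Proof.
  pose proof energy_at_end as Hen. pose proof moment_lt_arc as Hmom.
  pose proof kappa_u0_a_le as Hu0a. pose proof end_height_ge_u0 as HU.
  pose proof end_sin_psi_pos as Hc. pose proof end_sin_psi_le1 as Hc1.
  set (w := sqrt (1 - c ^ 2)) in *. set (F := (2 * c / kappa + arc_moment (a / c) a) / a).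
  assert (Hw : w < 1) by (unfold w; rewrite <- sqrt_1 at 2; apply sqrt_lt_1_alt; nra).
  assert (Hsum : U + u0 < F).
  { assert (a * u0 <= c / kappa) by (apply (Rle_div_r (a * u0) c kappa); nra).
    unfold F. apply Rlt_div_r; lra. }
  assert (Hrise : 2 * (1 - w) = kappa * (U - u0) * (U + u0)) by nra.
  split; [|exact height_lt_arc].
  rewrite Hrise.
  replace (kappa * (U - u0) * (U + u0) / (kappa * F)) with ((U - u0) * ((U + u0) / F))
    by (field; lra).
  assert (Hpos : 0 < U - u0).
  { apply (Rmult_lt_reg_r (kappa * (U + u0))); [nra|]. lra. }
  assert ((U + u0) / F < 1) by (apply (Rdiv_lt_1 (U + u0) F); lra).
  nra.
Qed.
End EndValues.
End CapillaryProfile.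

Lemma sqrt_1_minus_cos_sqr g : 0 <= g <= PI -> sqrt (1 - cos g ^ 2) = sin g.
Proof.
  intros Hg. replace (1 - cos g ^ 2) with (sin g ^ 2).
  - apply sqrt_pow2, sin_ge_0; lra.
  - pose proof (sin2_cos2 g). unfold Rsqr in *. lra.
Qed.

Lemma asin_cos g : 0 <= g <= PI -> asin (cos g) = PI / 2 - g.
Proof. intros Hg. rewrite <- sin_shift. apply asin_sin. lra. Qed.

Lemma f_gamma_arc_moment kappa a g : 0 < kappa -> 0 < a -> 0 <= g < PI / 2 ->
  f_gamma kappa a g = (2 * cos g / kappa + arc_moment (a / cos g) a) / a.
Proof.
  intros Hk Ha Hg. assert (Hc : 0 < cos g) by (apply cos_gt_0; lra).
  unfold f_gamma, arc_moment, circ_segment, tan.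
  replace (a / (a / cos g)) with (cos g) by (field; lra).
  rewrite asin_cos, sqrt_1_minus_cos_sqr by lra. field. lra.
Qed.

Theorem mainTheorem12 (kappa u0 a gamma : R) (u du : R -> R) :
  0 < kappa -> 0 < u0 -> 0 < a -> 0 <= gamma -> gamma < PI / 2 ->
  (forall r, 0 <= r < a -> is_derive u r (du r)) ->
  (forall r, 0 <= r < a -> is_derive (sin_psi du) r (kappa * u r)) ->
  u 0 = u0 -> du 0 = 0 ->
  filterlim (sin_psi du) (at_left a) (locally (cos gamma)) ->
  filterlim u (at_left a) (locally (u a)) ->
  2 * (1 - sin gamma) / (kappa * f_gamma kappa a gamma) < u a - u0
  < a * (1 - sin gamma) / cos gamma.
Proof.
  intros Hk Hu0 Ha Hg0 Hg1 Hu' Hs' Hu_0 Hdu_0 Hs_a Hu_a.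
  assert (Hc : 0 < cos gamma) by (apply cos_gt_0; lra).
  rewrite f_gamma_arc_moment, <- sqrt_1_minus_cos_sqr by lra.
  replace (a * (1 - sqrt (1 - cos gamma ^ 2)) / cos gamma)
    with (a / cos gamma * (1 - sqrt (1 - cos gamma ^ 2))) by (field; lra).
  exact (capillary_rise_bounds kappa u0 a u du Hk Hu0 Hu' Hs' Hu_0 Hdu_0 _ _ Ha Hs_a Hu_a).
Qed.
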